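(* Consider the genus 2 setting described in the context (curve $y^2=x^5+p_2x^3+p_3x^2+p_4x+p_5$, Lax operator $L$ in Tyurin parametrization with gauge $\alpha_3=(1,0)^T$, $\alpha_4=(0,1)^T$, and Hamiltonian $H$). Let $Z$ be the subvariety of the phase space defined by $$\alpha_{11}=\alpha_{22}=0,\qquad \beta_{11}=\beta_{21}=\beta_{12}=\beta_{22}=\beta_{23}=\beta_{14}=0.$$ Then $Z$ is invariant under the Hamiltonian flow of $H$: at every point of $Z$ (where defined) one has $\partial H/\partial\beta_{11}=\partial H/\partial\beta_{22}=0$ and $\partial H/\partial\alpha_{ij}=0$ for $(i,j)\in\{(1,1),(2,1),(1,2),(2,2)\}$. The restriction of $H$ to $Z$ equals $$H^{(r)}=\frac{2(\kappa_1-\kappa_4)(a_4\kappa_1-a_1\kappa_4)}{(a_1-a_4)^2}+\frac{2(\kappa_2-\kappa_3)(a_3\kappa_2-a_2\kappa_3)}{(a_2-a_3)^2},$$ and on $Z$ the Hamiltonian equations take the form $$\dot a_1=-\frac{2(a_1\kappa_4+a_4(\kappa_4-2\kappa_1))}{(a_1-a_4)^2},\quad \dot a_4=-\frac{2(a_4\kappa_1+a_1(\kappa_1-2\kappa_4))}{(a_1-a_4)^2},\quad \dot\kappa_1=\frac{\kappa_1-\kappa_4}{a_1-a_4}\dot a_1,\quad \dot\kappa_4=\frac{\kappa_1-\kappa_4}{a_1-a_4}\dot a_4,$$ $$\dot a_2=-\frac{2(a_2\kappa_3+a_3(\kappa_3-2\kappa_2))}{(a_2-a_3)^2},\quad \dot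 a_3=-\frac{2(a_3\kappa_2+a_2(\kappa_2-2\kappa_3))}{(a_2-a_3)^2},\quad \dot\kappa_2=\frac{\kappa_2-\kappa_3}{a_2-a_3}\dot a_2,\quad \dot\kappa_3=\frac{\kappa_2-\kappa_3}{a_2-a_3}\dot a_3,$$ $$\dot\alpha_{12}=\alpha_{12}\frac{b_2+b_3}{a_2-a_3}\dot a_3,\qquad \dot\alpha_{21}=\alpha_{21}\frac{b_1+b_4}{a_1-a_4}\dot a_4 .$$ In particular, the first eight equations form the Hamiltonian system with Hamiltonian $H^{(r)}$ in the canonical coordinates $(a_s,\kappa_s)_{s=1}^4$.
   Context: Let $\Sigma$ be the genus 2 hyperelliptic curve $y^2=P(x)=x^5+p_2x^3+p_3x^2+p_4x+p_5$ (i.e. the coefficient $p_1$ of $x^4$ is $0$), with $p_2,\dots,p_5\in\mathbb{C}$. Dynamical variables: points $(a_s,b_s)\in\Sigma$, $s=1,\dots,4$, with pairwise distinct $a_s$ (each $b_s$ is regarded as a local branch of $\sqrt{P(a_s)}$, hence a function of $a_s$); numbers $\kappa_1,\dots,\kappa_4$; vectors $\alpha_1=(\alpha_{11},\alpha_{21})^T$, $\alpha_2=(\alpha_{12},\alpha_{22})^T$, $\beta_1=(\beta_{11},\beta_{21})^T$, $\beta_2=(\beta_{12},\beta_{22})^T$, $\beta_3=(0,\beta_{23})^T$, $\beta_4=(\beta_{14},0)^T$, and the gauge-fixed vectors $\alpha_3=(1,0)^T$, $\alpha_4=(0,1)^T$. The Lax operator is $$L(x,y)=A_0+A_1x+\sum_{s=1}^4\alpha_s\beta_s^T\frac{y+b_s}{x-a_s},$$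 where the $2\times2$ matrices $A_0,A_1$ are determined (as rational functions of the remaining variables, for generic values) by the eight scalar linear equations $L(a_s,b_s)\alpha_s=\kappa_s\alpha_s$, $s=1,\dots,4$, in which, in $L(a_s,b_s)$, the singular summand with index $s$ is omitted. Near $x=\infty$ use the local parameter $z$ with $x=z^{-2}$, $y=z^{-5}(1+p_2z^4+p_3z^6+p_4z^8+p_5z^{10})^{1/2}$ (branch equal to $1$ at $z=0$). The Hamiltonian is $$H=-\operatorname{res}_{z=0}\, z^{-4}\,y(z)^{-1}\,\operatorname{tr}\big(L(x(z),y(z))^2\big)\,dz \;=\;\tfrac12\operatorname{res}_{z=0} z^{-1}\operatorname{tr}L^2\,\frac{dx}{y}.$$ The Hamiltonian equations are $\dot a_s=\partial H/\partial\kappa_s$, $\dot\kappa_s=-\partial H/\partial a_s$ ($s=1,\dots,4$, with $b_s$ differentiated as a function of $a_s$), $\dot\alpha_{ij}=\partial H/\partial\beta_{ij}$, $\dot\beta_{ij}=-\partial H/\partial\alpha_{ij}$ for $(i,j)\in\{(1,1),(2,1),(1,2),(2,2)\}$, and $\dot\beta_{23}=\dot\beta_{14}=0$ (their conjugate variables are fixed by the gauge and $H$ does not depend on them). *)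

From HB Require Import structures.
From mathcomp Require Import all_boot all_order all_algebra.
Set Implicit Arguments. Unset Strict Implicit. Unset Printing Implicit Defensive.
Import Order.TTheory GRing.Theory Num.Theory.
Local Open Scope ring_scope.

(* Dual numbers F[eps]/(eps^2), used to express first-order (partial) derivatives
   algebraically: for a function given by field operations, f(x + eps v) = f(x) + eps (Df(x) v). *)
Definition dual (F : fieldType) : Type := (F * F)%type.

Section Dual.
Variable F : fieldType.
HB.instance Definition _ := GRing.Zmodule.on (dual F).

Definition dre (x : dual F) : F := x.1.
Definition dep (x : dual F) : F := x.2.
Definition dmk (r e : F) : dual F := (r, e).
Definition done_ : dual F := (1, 0).
Definition dmul (x y : dual F) : dual F := (x.1 * y.1, x.1 * y.2 + x.2 * y.1).

Lemma dmulA : associative dmul.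
Proof.
move=> [a b] [c d] [e f]; rewrite /dmul /=; congr pair; first by rewrite mulrA.
by rewrite !mulrDr !mulrDl !mulrA addrA.
Qed.
Lemma dmulC : commutative dmul.
Proof. by move=> [a b] [c d]; rewrite /dmul /= [c * a]mulrC [c * b]mulrC [d * a]mulrC addrC. Qed.
Lemma dmul1 : left_id done_ dmul.
Proof. by move=> [a b]; rewrite /dmul /= !mul1r mul0r addr0. Qed.
Lemma dmulDl : left_distributive dmul +%R.
Proof.
move=> [a b] [c d] [e f]; rewrite /dmul /=; congr pair; first by rewrite mulrDl.
by rewrite !mulrDl addrACA.
Qed.
Lemma done_neq0 : done_ != 0.
Proof. by apply/negP => /eqP [] /eqP; rewrite oner_eq0. Qed.

HB.instance Definition _ := GRing.Zmodule_isComNzRing.Build (dual F)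
  dmulA dmulC dmul1 dmulDl done_neq0.

Definition dunit : {pred dual F} := fun x => x.1 != 0.
Definition dinv (x : dual F) : dual F :=
  if x.1 == 0 then x else (x.1^-1, - (x.2 / x.1 ^+ 2)).
Lemma dmulVx : {in dunit, left_inverse 1 dinv *%R}.
Proof.
move=> [a b]; rewrite /dunit /dinv /= => a0; rewrite (negbTE a0).
rewrite /GRing.mul /= /dmul /=; congr pair; first by rewrite mulVf.
by rewrite mulNr expr2 invfM -!mulrA mulVf // mulr1 mulrC subrr.
Qed.
Lemma dunitPl : forall x y : dual F, y * x = 1 -> dunit x.
Proof.
move=> [a b] [c d] /(congr1 fst) /= H; rewrite /dunit /=; apply/eqP => a0.
by move: H; rewrite a0 mulr0 => /eqP; rewrite eq_sym oner_eq0.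
Qed.
Lemma dinv_out : {in [predC dunit], dinv =1 id}.
Proof. by move=> [a b]; rewrite inE /dunit /dinv /= negbK => ->. Qed.

HB.instance Definition _ := GRing.ComNzRing_hasMulInverse.Build (dual F)
  dmulVx dunitPl dinv_out.
End Dual.

(* Phase space of the genus-2 system (Tyurin parametrization, gauge
   alpha_3 = (1,0)^T, alpha_4 = (0,1)^T, beta_3 = (0,beta_23)^T, beta_4 = (beta_14,0)^T). *)
Record phase (R : Type) := Phase {
  a1 : R; a2 : R; a3 : R; a4 : R;
  b1 : R; b2 : R; b3 : R; b4 : R;          (* y-coordinates b_s (branches of sqrt P(a_s)) *)
  k1 : R; k2 : R; k3 : R; k4 : R;
  al11 : R; al21 : R; al12 : R; al22 : R;  (* alpha_1 = (al11,al21)^T, alpha_2 = (al12,al22)^T *)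
  be11 : R; be21 : R; be12 : R; be22 : R;  (* beta_1 = (be11,be21)^T, beta_2 = (be12,be22)^T *)
  be23 : R; be14 : R                       (* beta_3 = (0,be23)^T, beta_4 = (be14,0)^T *)
}.

Section Lax.
Variable R : comUnitRingType.
Implicit Types (P : phase R).

Definition v2 (x y : R) : 'cV[R]_2 := \col_(i < 2) nth 0 [:: x; y] i.

(* indices s = 1,2,3,4 of the paper correspond to s = 0,1,2,3 : 'I_4 here *)
Definition aa P (s : 'I_4) : R := nth 0 [:: a1 P; a2 P; a3 P; a4 P] s.
Definition bb P (s : 'I_4) : R := nth 0 [:: b1 P; b2 P; b3 P; b4 P] s.
Definition kk P (s : 'I_4) : R := nth 0 [:: k1 P; k2 P; k3 P; k4 P] s.
Definition alpha P (s : 'I_4) : 'cV[R]_2 :=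
  nth 0 [:: v2 (al11 P) (al21 P); v2 (al12 P) (al22 P); v2 1 0; v2 0 1] s.
Definition beta P (s : 'I_4) : 'cV[R]_2 :=
  nth 0 [:: v2 (be11 P) (be21 P); v2 (be12 P) (be22 P); v2 0 (be23 P); v2 (be14 P) 0] s.

(* The singular part of L(a_s,b_s) with the s-th summand omitted:
   sum_{t <> s} alpha_t beta_t^T (b_s + b_t)/(a_s - a_t). *)
Definition Lsing P (s : 'I_4) : 'M[R]_2 :=
  \sum_(t < 4 | t != s) ((bb P s + bb P t) / (aa P s - aa P t)) *: (alpha P t *m (beta P t)^T).

(* The eight scalar equations (A0 + a_s A1 + Lsing s) alpha_s = kappa_s alpha_s,
   transposed, read  alpha_s^T A0^T + a_s alpha_s^T A1^T = (kappa_s alpha_s - Lsing s alpha_s)^T,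
   i.e. W *m Y = RHS with unknown Y = col_mx A0^T A1^T. *)
Definition Wmx P : 'M[R]_(4, 2 + 2) :=
  \matrix_(s < 4) row_mx (alpha P s)^T (aa P s *: (alpha P s)^T).
Definition RHSmx P : 'M[R]_(4, 2) :=
  \matrix_(s < 4) (kk P s *: alpha P s - Lsing P s *m alpha P s)^T.
Definition Ysol P : 'M[R]_(2 + 2, 2) := invmx (Wmx P) *m RHSmx P.
Definition A0 P : 'M[R]_2 := (usubmx (Ysol P))^T.
Definition A1 P : 'M[R]_2 := (dsubmx (Ysol P))^T.

Definition Lat P (s : 'I_4) : 'M[R]_2 := A0 P + aa P s *: A1 P + Lsing P s.

(* Laurent expansion at infinity, x = z^-2, y = z^-5 (1 + p2 z^4 + ...)^(1/2):
   (y+b_s)/(x-a_s) = z^-3 + a_s z^-1 + (a_s^2 + p2/2) z + O(z^2), hence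
   L = Lc(-3) z^-3 + Lc(-2) z^-2 + Lc(-1) z^-1 + Lc(0) + Lc(1) z + O(z^2) with *)
Definition Bk P (k : nat) : 'M[R]_2 := \sum_(s < 4) (aa P s ^+ k) *: (alpha P s *m (beta P s)^T).
Definition Lm3 P := Bk P 0.
Definition Lm2 P := A1 P.
Definition Lm1 P := Bk P 1.
Definition L0 P := A0 P.
Definition L1 (p2 : R) P := Bk P 2 + (p2 / 2%:R) *: Bk P 0.

(* H = -res_{z=0} z^-4 y(z)^-1 tr(L^2) dz = - [z^-2] ( tr(L^2) * (1 + p2 z^4 + ...)^(-1/2) )
     = - ( [z^-2] tr L^2  - (p2/2) [z^-6] tr L^2 ). *)
Definition Ham (p2 : R) P : R :=
  - ( (\tr (Lm3 P *m L1 p2 P) + \tr (L1 p2 P *m Lm3 P)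
       + \tr (Lm2 P *m L0 P) + \tr (L0 P *m Lm2 P) + \tr (Lm1 P *m Lm1 P))
      - (p2 / 2%:R) * \tr (Lm3 P *m Lm3 P) ).

Definition Hred P : R :=
  2%:R * (k1 P - k4 P) * (a4 P * k1 P - a1 P * k4 P) / (a1 P - a4 P) ^+ 2
  + 2%:R * (k2 P - k3 P) * (a3 P * k2 P - a2 P * k3 P) / (a2 P - a3 P) ^+ 2.
End Lax.

Section Deriv.
Variable F : fieldType.

Definition Pcurve (p2 p3 p4 p5 : F) : {poly F} :=
  'X^5 + p2 *: 'X^3 + p3 *: 'X^2 + p4 *: 'X + p5%:P.

(* derivative of the branch b(a) = sqrt(P(a)) at a point (a,b) of the curve:
   db/da = P'(a) / (2 b) *)
Definition dbda (p2 p3 p4 p5 : F) (a b : F) : F := (Pcurve p2 p3 p4 p5)^`().[a] / (2%:R * b).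

Inductive var := va1 | va2 | va3 | va4 | vk1 | vk2 | vk3 | vk4
  | val11 | val21 | val12 | val22 | vbe11 | vbe21 | vbe12 | vbe22.
Scheme Equality for var.

(* tangent vector of the coordinate x at the point v: the coordinate x moves with
   unit speed, all other coordinates are fixed, except that b_s moves with a_s *)
Definition dir (p2 p3 p4 p5 : F) (x : var) (v : phase F) : phase F :=
  let e y := if var_beq x y then 1 else 0 in
  Phase (e va1) (e va2) (e va3) (e va4)
    (if x is va1 then dbda p2 p3 p4 p5 (a1 v) (b1 v) else 0)
    (if x is va2 then dbda p2 p3 p4 p5 (a2 v) (b2 v) else 0)
    (if x is va3 then dbda p2 p3 p4 p5 (a3 v) (b3 v) else 0)
    (if x is va4 then dbda p2 p3 p4 p5 (a4 v) (b4 v) else 0)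
    (e vk1) (e vk2) (e vk3) (e vk4)
    (e val11) (e val21) (e val12) (e val22)
    (e vbe11) (e vbe21) (e vbe12) (e vbe22) 0 0.

Definition dlift (v dv : phase F) : phase (dual F) :=
  Phase (a1 v, a1 dv) (a2 v, a2 dv) (a3 v, a3 dv) (a4 v, a4 dv)
        (b1 v, b1 dv) (b2 v, b2 dv) (b3 v, b3 dv) (b4 v, b4 dv)
        (k1 v, k1 dv) (k2 v, k2 dv) (k3 v, k3 dv) (k4 v, k4 dv)
        (al11 v, al11 dv) (al21 v, al21 dv) (al12 v, al12 dv) (al22 v, al22 dv)
        (be11 v, be11 dv) (be21 v, be21 dv) (be12 v, be12 dv) (be22 v, be22 dv)
        (be23 v, be23 dv) (be14 v, be14 dv).

Definition dHam (p2 p3 p4 p5 : F) (x : var) (v : phase F) : F :=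
  (Ham ((p2, 0) : dual F) (dlift v (dir p2 p3 p4 p5 x v))).2.
Definition dHred (p2 p3 p4 p5 : F) (x : var) (v : phase F) : F :=
  (Hred (dlift v (dir p2 p3 p4 p5 x v))).2.
End Deriv.

(* On Z all beta_s vanish, so the singular part of L drops out of the equations
   L(a_s, b_s) alpha_s = kappa_s alpha_s, and alpha_2, alpha_3 (resp. alpha_1, alpha_4)
   point along e_1 (resp. e_2).  Hence A0 + x A1 is diagonal, with entries the lines
   through (a_2, kappa_2), (a_3, kappa_3) and through (a_1, kappa_1), (a_4, kappa_4), the
   residue terms B_k of L vanish, and H = -2 tr (A0 A1) = H^(r).
   Partial derivatives are eps-parts of H over the dual numbers F[eps].  Along any tangent
   vector the beta_s are O(eps), so every product B_k B_l still vanishes and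
   H = -2 tr (A0 A1) to first order; the first-order parts of A0, A1 are again obtained by
   linear interpolation, now of the eps-parts of the eigenvector equations. *)

From HB Require Import structures.
From mathcomp Require Import all_boot all_order all_algebra.
From mathcomp Require Import ring.
Import Order.TTheory GRing.Theory Num.Theory.
Set Implicit Arguments. Unset Strict Implicit. Unset Printing Implicit Defensive.
Local Open Scope ring_scope.

Section DualNumber.
Variable F : fieldType.
Implicit Types (a b c d : F) (x : dual F).

Lemma dualD a b c d : ((a, b) : dual F) + (c, d) = (a + c, b + d). Proof. by []. Qed.
Lemma dualN a b : - ((a, b) : dual F) = (- a, - b). Proof. by []. Qed.
Lemma dualB a b c d : ((a, b) : dual F) - (c, d) = (a - c, b - d). Proof. by []. Qed.
Lemma dualM a b c d : ((a, b) : dual F) * (c, d) = (a * c, a * d + b * c). Proof. by []. Qed.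
Lemma dual1 : (1 : dual F) = (1, 0). Proof. by []. Qed.
Lemma dualMn n : (n%:R : dual F) = (n%:R, 0).
Proof. by elim: n => [|n IH]; rewrite ?mulr0n // !mulrS IH dual1 dualD addr0. Qed.
Lemma dualV a b : a != 0 -> ((a, b) : dual F)^-1 = (a^-1, - (b / a ^+ 2)).
Proof. by move=> /negbTE a0; rewrite /GRing.inv /= /dinv /= a0. Qed.

Lemma dre_is_zmod_morphism : zmod_morphism (@dre F). Proof. by move=> [a b] [c d]. Qed.
HB.instance Definition _ :=
  GRing.isZmodMorphism.Build (dual F) F (@dre F) dre_is_zmod_morphism.
Lemma dre_is_monoid_morphism : monoid_morphism (@dre F). Proof. by split=> // -[a b] [c d]. Qed.
HB.instance Definition _ :=
  GRing.isMonoidMorphism.Build (dual F) F (@dre F) dre_is_monoid_morphism.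

(* Unlike [rmorphV], no unit condition: [dinv] fixes the non-units, whose real part is 0. *)
Lemma dreV x : dre x^-1 = (dre x)^-1.
Proof.
case: x => a b; have [->|/dualV -> //] := eqVneq a 0.
by rewrite invr0 [in LHS]/GRing.inv /= /dinv eqxx.
Qed.

Lemma dre_div x y : dre (x / y) = dre x / dre y.
Proof. by rewrite -dreV. Qed.

Lemma dual_sum2 (I : Type) (r : seq I) (P : pred I) (f : I -> dual F) :
  (\sum_(i <- r | P i) f i).2 = \sum_(i <- r | P i) (f i).2.
Proof. by elim/big_rec2: _ => // i y1 y2 _ <-. Qed.

Lemma unitmx_dual n (M : 'M[dual F]_n) :
  (M \in unitmx) = (map_mx (@dre F) M \in unitmx).
Proof. by rewrite !unitmxE det_map_mx unitfE. Qed.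
End DualNumber.

Definition mxdual {F : fieldType} {m n} (M N : 'M[F]_(m, n)) : 'M[dual F]_(m, n) :=
  \matrix_(i, j) (M i j, N i j).

Section DualMatrix.
Variable F : fieldType.

Lemma mxdualD m n (M N M' N' : 'M[F]_(m, n)) :
  mxdual M N + mxdual M' N' = mxdual (M + M') (N + N').
Proof. by apply/matrixP => i j; rewrite !mxE. Qed.

Lemma mxdualZ m n a b (M N : 'M[F]_(m, n)) :
  ((a, b) : dual F) *: mxdual M N = mxdual (a *: M) (a *: N + b *: M).
Proof. by apply/matrixP => i j; rewrite !mxE. Qed.

Lemma mxdual0 m n : mxdual (0 : 'M[F]_(m, n)) 0 = 0.
Proof. by apply/matrixP => i j; rewrite !mxE. Qed.

Lemma mxdual_trmx m n (M N : 'M[F]_(m, n)) : (mxdual M N)^T = mxdual M^T N^T.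
Proof. by apply/matrixP => i j; rewrite !mxE. Qed.

Lemma mxdualM m n p (M N : 'M[F]_(m, n)) (M' N' : 'M[F]_(n, p)) :
  mxdual M N *m mxdual M' N' = mxdual (M *m M') (M *m N' + N *m M').
Proof.
apply/matrixP => i j; rewrite !mxE [LHS]surjective_pairing dual_sum2 -big_split /=.
rewrite (big_morph _ (rmorphD (@dre F)) (rmorph0 (@dre F))); congr pair.
  by apply: eq_bigr => k _; rewrite !mxE.
by apply: eq_bigr => k _; rewrite !mxE.
Qed.

Lemma mxdual_sum m n (I : Type) (r : seq I) (P : pred I) (M N : I -> 'M[F]_(m, n)) :
  \sum_(i <- r | P i) mxdual (M i) (N i) =
  mxdual (\sum_(i <- r | P i) M i) (\sum_(i <- r | P i) N i).
Proof.
elim/big_rec3: _ => [|i A B C _ ->]; last by rewrite mxdualD.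
by apply/matrixP => i j; rewrite !mxE.
Qed.

Lemma mxdual_trace n (M N : 'M[F]_n) : \tr (mxdual M N) = (\tr M, \tr N).
Proof.
rewrite [LHS]surjective_pairing /mxtrace dual_sum2.
rewrite (big_morph _ (rmorphD (@dre F)) (rmorph0 (@dre F))).
by congr pair; apply: eq_bigr => i _; rewrite mxE.
Qed.
End DualMatrix.

Definition mxs {R : zmodType} m n (rows : seq (seq R)) : 'M[R]_(m, n) :=
  \matrix_(i, j) nth 0 (nth [::] rows i) j.
Definition mx2 {R : zmodType} (a b c d : R) : 'M[R]_2 := mxs 2 2 [:: [:: a; b]; [:: c; d]].

Lemma mxtrace_mx2_mul (R : comRingType) (a b c d a' b' c' d' : R) :
  \tr (mx2 a b c d *m mx2 a' b' c' d') = a * a' + b * c' + c * b' + d * d'.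
Proof.
by rewrite /mxtrace !big_ord_recl !big_ord0 !mxE !big_ord_recl !big_ord0 !mxE /=; ring.
Qed.

Definition slope {F : fieldType} (x y u w : F) : F := (u - w) / (x - y).
Definition intercept {F : fieldType} (x y u w : F) : F := w - y * slope x y u w.

Section Tyurin.
Variable R : comUnitRingType.
Implicit Types P : phase R.

Lemma Bk_beta0 P k : (forall s, beta P s = 0) -> Bk P k = 0.
Proof. by move=> hb; rewrite /Bk big1 // => s _; rewrite hb trmx0 mulmx0 scaler0. Qed.

Lemma Lsing_beta0 P s : (forall t, beta P t = 0) -> Lsing P s = 0.
Proof. by move=> hb; rewrite /Lsing big1 // => t _; rewrite hb trmx0 mulmx0 scaler0. Qed.

Lemma Ham_BkM0 (p2 : R) P : (forall k l, Bk P k *m Bk P l = 0) ->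
  Ham p2 P = - (2%:R * \tr (A0 P *m A1 P)).
Proof.
move=> hB; rewrite /Ham /Lm3 /Lm2 /Lm1 /L0 /L1 mulmxDr mulmxDl -scalemxAr -scalemxAl !hB.
rewrite scaler0 !addr0 !mxtrace0 mulr0 subr0 !add0r addr0 mxtrace_mulC.
by rewrite mulr_natl mulr2n.
Qed.

Lemma row_Wmx_mul P n (Y0 Y1 : 'M[R]_(2, n)) s :
  row s (Wmx P *m col_mx Y0 Y1) = (alpha P s)^T *m (Y0 + aa P s *: Y1).
Proof. by rewrite row_mul rowK mul_row_col -scalemxAl mulmxDr scalemxAr. Qed.

Lemma A0A1_unique P (B0 B1 : 'M[R]_2) : Wmx P \in unitmx ->
  (forall s, (B0 + aa P s *: B1 + Lsing P s) *m alpha P s = kk P s *: alpha P s) ->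
  A0 P = B0 /\ A1 P = B1.
Proof.
move=> hW hB.
have hY : Wmx P *m col_mx B0^T B1^T = RHSmx P.
  apply/row_matrixP => s; rewrite row_Wmx_mul rowK -hB mulmxDl addrK.
  by rewrite trmx_mul !linearD /= !linearZ.
by rewrite /A0 /A1 /Ysol -hY mulKmx // col_mxKu col_mxKd !trmxK.
Qed.
End Tyurin.

(* The gauge-fixed alpha_3, alpha_4 do not move. *)
Definition dalpha {R : comUnitRingType} (P : phase R) (s : 'I_4) : 'cV[R]_2 :=
  nth 0 [:: v2 (al11 P) (al21 P); v2 (al12 P) (al22 P)] s.

Section Lift.
Variables (F : fieldType) (v dv : phase F).

Lemma aa_dlift s : aa (dlift v dv) s = (aa v s, aa dv s).
Proof. by case: s => -[|[|[|[|//]]]]. Qed.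
Lemma bb_dlift s : bb (dlift v dv) s = (bb v s, bb dv s).
Proof. by case: s => -[|[|[|[|//]]]]. Qed.
Lemma kk_dlift s : kk (dlift v dv) s = (kk v s, kk dv s).
Proof. by case: s => -[|[|[|[|//]]]]. Qed.

Lemma alpha_dlift s : alpha (dlift v dv) s = mxdual (alpha v s) (dalpha dv s).
Proof.
apply/matrixP => i j; rewrite !mxE.
by case: s => -[|[|[|[|//]]]] ?; case: i => -[|[|//]] ?; rewrite /alpha /dalpha /v2 /= !mxE.
Qed.

Lemma beta_dlift s : beta (dlift v dv) s = mxdual (beta v s) (beta dv s).
Proof.
apply/matrixP => i j; rewrite !mxE.
by case: s => -[|[|[|[|//]]]] ?; case: i => -[|[|//]] ?; rewrite /beta /v2 /= !mxE.
Qed.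

Lemma rank1_sum_dlift (r : seq 'I_4) (Q : pred 'I_4) (c : 'I_4 -> dual F) :
  (forall s, beta v s = 0) ->
  \sum_(t <- r | Q t) c t *: (alpha (dlift v dv) t *m (beta (dlift v dv) t)^T) =
  mxdual 0 (\sum_(t <- r | Q t) dre (c t) *: (alpha v t *m (beta dv t)^T)).
Proof.
move=> hb; rewrite (eq_bigr (fun t => mxdual 0 (dre (c t) *: (alpha v t *m (beta dv t)^T)))).
  by rewrite mxdual_sum big1_eq.
move=> t _; rewrite alpha_dlift beta_dlift hb mxdual_trmx mxdualM trmx0 mulmx0 mulmx0 addr0.
by rewrite [c t]surjective_pairing mxdualZ !scaler0 addr0.
Qed.
End Lift.

Section OnZ.
Variables (F : fieldType) (v : phase F).
Hypotheses (al11_0 : al11 v = 0) (al22_0 : al22 v = 0).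
Hypotheses (al12_neq0 : al12 v != 0) (al21_neq0 : al21 v != 0).
Hypotheses (be11_0 : be11 v = 0) (be21_0 : be21 v = 0) (be12_0 : be12 v = 0).
Hypotheses (be22_0 : be22 v = 0) (be23_0 : be23 v = 0) (be14_0 : be14 v = 0).
Hypotheses (a12 : a1 v != a2 v) (a13 : a1 v != a3 v) (a14 : a1 v != a4 v).
Hypotheses (a23 : a2 v != a3 v) (a24 : a2 v != a4 v) (a34 : a3 v != a4 v).

Lemma beta_Z s : beta v s = 0.
Proof.
apply/matrixP => i j; rewrite !mxE.
by case: s => -[|[|[|[|//]]]] ?; case: i => -[|[|//]] ?;
  rewrite /beta /v2 /= mxE /= ?be11_0 ?be21_0 ?be12_0 ?be22_0 ?be23_0 ?be14_0.
Qed.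

Lemma Wmx_unit_Z : Wmx v \in unitmx.
Proof.
pose l23 := slope (a2 v) (a3 v); pose l14 := slope (a1 v) (a4 v).
pose m23 := intercept (a2 v) (a3 v); pose m14 := intercept (a1 v) (a4 v).
pose p := (al12 v)^-1; pose q := (al21 v)^-1.
(* The inverse also comes from interpolation, the rows of Y0 + x Y1 being lines in x. *)
pose Y0 : 'M_(2, 4) := mxs _ _ [:: [:: 0; m23 p 0; m23 0 1; 0]; [:: m14 q 0; 0; 0; m14 0 1]].
pose Y1 : 'M_(2, 4) := mxs _ _ [:: [:: 0; l23 p 0; l23 0 1; 0]; [:: l14 q 0; 0; 0; l14 0 1]].
suff /mulmx1_unit[] : Wmx v *m col_mx Y0 Y1 = 1%:M by [].
apply/row_matrixP => s; rewrite row_Wmx_mul; apply/rowP => j.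
rewrite !mxE !big_ord_recl big_ord0 !mxE.
case: s => -[|[|[|[|//]]]] ?; case: j => -[|[|[|[|//]]]] ?.
all: rewrite /aa /alpha /v2 /= !mxE /= ?al11_0 ?al22_0.
all: rewrite /m23 /m14 /l23 /l14 /intercept /slope /p /q.
all: by field; rewrite !subr_eq0 ?a14 ?a23 ?al12_neq0 ?al21_neq0.
Qed.

Definition slope23 := slope (a2 v) (a3 v) (k2 v) (k3 v).
Definition slope14 := slope (a1 v) (a4 v) (k1 v) (k4 v).
Definition icept23 := intercept (a2 v) (a3 v) (k2 v) (k3 v).
Definition icept14 := intercept (a1 v) (a4 v) (k1 v) (k4 v).
Definition A0Z : 'M[F]_2 := mx2 icept23 0 0 icept14.
Definition A1Z : 'M[F]_2 := mx2 slope23 0 0 slope14.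

Lemma eigen_Z s : (A0Z + aa v s *: A1Z) *m alpha v s = kk v s *: alpha v s.
Proof.
apply/matrixP => i j; rewrite !mxE !big_ord_recl big_ord0 !mxE.
case: s => -[|[|[|[|//]]]] ?; case: i => -[|[|//]] ?.
all: rewrite /aa /kk /alpha /v2 /= !mxE /= ?al11_0 ?al22_0.
all: rewrite /icept23 /icept14 /slope23 /slope14 /intercept /slope.
all: by field; rewrite subr_eq0 ?a14 ?a23.
Qed.

Lemma A0A1_Z : A0 v = A0Z /\ A1 v = A1Z.
Proof.
apply: A0A1_unique Wmx_unit_Z _ => s.
by rewrite Lsing_beta0 ?addr0; [exact: eigen_Z | exact: beta_Z].
Qed.

Lemma Ham_Z (p2 : F) : Ham p2 v = Hred v.
Proof.
rewrite Ham_BkM0; last by move=> k l; rewrite Bk_beta0 ?mul0mx //; exact: beta_Z.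
have [-> ->] := A0A1_Z.
rewrite mxtrace_mx2_mul /Hred /icept23 /icept14 /slope23 /slope14 /intercept /slope.
by field; rewrite !subr_eq0 a14 a23.
Qed.

Section FirstOrder.
Variable dv : phase F.
Hypotheses (dbe23_0 : be23 dv = 0) (dbe14_0 : be14 dv = 0).

Let a21 : a2 v != a1 v. Proof. by rewrite eq_sym. Qed.
Let a31 : a3 v != a1 v. Proof. by rewrite eq_sym. Qed.
Let a41 : a4 v != a1 v. Proof. by rewrite eq_sym. Qed.
Let a32 : a3 v != a2 v. Proof. by rewrite eq_sym. Qed.
Let a42 : a4 v != a2 v. Proof. by rewrite eq_sym. Qed.
Let a43 : a4 v != a3 v. Proof. by rewrite eq_sym. Qed.
Let a_neq := (a12, a13, a14, a23, a24, a34, a21, a31, a41, a32, a42, a43).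

Definition dLsing s := \sum_(t < 4 | t != s)
  ((bb v s + bb v t) / (aa v s - aa v t)) *: (alpha v t *m (beta dv t)^T).

Lemma Lsing_dlift s : Lsing (dlift v dv) s = mxdual 0 (dLsing s).
Proof.
rewrite /Lsing rank1_sum_dlift; last exact: beta_Z.
by congr mxdual; apply: eq_bigr => t _; rewrite dre_div !aa_dlift !bb_dlift.
Qed.

Lemma BkM_dlift k l : Bk (dlift v dv) k *m Bk (dlift v dv) l = 0.
Proof.
rewrite /Bk !rank1_sum_dlift ?mxdualM ?mul0mx ?mulmx0 ?addr0 ?mxdual0 //; exact: beta_Z.
Qed.

(* [du_s_i]: eps-part at x = a_s of entry i of the column of A0 + x A1 that is fixed by the
   eigenvector equation of index s (column 0 for s = 2, 3 and column 1 for s = 1, 4). *)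
Definition du10 := (k1 v - icept23 - a1 v * slope23) * al11 dv / al21 v
  - (b1 v + b2 v) / (a1 v - a2 v) * al12 v * be22 dv.
Definition du11 := k1 dv - slope14 * a1 dv.
Definition du20 := k2 dv - slope23 * a2 dv.
Definition du21 := (k2 v - icept14 - a2 v * slope14) * al22 dv / al12 v
  - (b2 v + b1 v) / (a2 v - a1 v) * al21 v * be11 dv.
Definition du30 := k3 dv - slope23 * a3 dv - (b3 v + b2 v) / (a3 v - a2 v) * al12 v * be12 dv.
Definition du31 := - ((b3 v + b1 v) / (a3 v - a1 v) * al21 v * be11 dv).
Definition du40 := - ((b4 v + b2 v) / (a4 v - a2 v) * al12 v * be22 dv).
Definition du41 := k4 dv - slope14 * a4 dv - (b4 v + b1 v) / (a4 v - a1 v) * al21 v * be21 dv.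

Definition dA0 : 'M[F]_2 :=
  mx2 (intercept (a2 v) (a3 v) du20 du30) (intercept (a1 v) (a4 v) du10 du40)
      (intercept (a2 v) (a3 v) du21 du31) (intercept (a1 v) (a4 v) du11 du41).
Definition dA1 : 'M[F]_2 :=
  mx2 (slope (a2 v) (a3 v) du20 du30) (slope (a1 v) (a4 v) du10 du40)
      (slope (a2 v) (a3 v) du21 du31) (slope (a1 v) (a4 v) du11 du41).

Lemma Wmx_unit_dlift : Wmx (dlift v dv) \in unitmx.
Proof.
rewrite unitmx_dual.
suff -> : map_mx (@dre F) (Wmx (dlift v dv)) = Wmx v by exact: Wmx_unit_Z.
apply/matrixP => s j; rewrite !mxE; case: splitP => k _; rewrite !mxE ?rmorphM.
all: by case: s => -[|[|[|[|//]]]] ?; case: k => -[|[|//]] ?; rewrite /aa /alpha /v2 /= !mxE.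
Qed.

Lemma eigen_dlift_eps s :
  (A0Z + aa v s *: A1Z) *m dalpha dv s
  + (dA0 + (aa v s *: dA1 + aa dv s *: A1Z) + dLsing s) *m alpha v s
  = kk v s *: dalpha dv s + kk dv s *: alpha v s.
Proof.
apply/matrixP => i j; rewrite /dLsing !mxE !big_ord_recl !big_ord0 !mxE !summxE.
rewrite !big_mkcond !big_ord_recl !big_ord0 /=.
case: s => -[|[|[|[|//]]]] ?; case: i => -[|[|//]] ?.
all: rewrite ?summxE ?big_mkcond ?big_ord_recl ?big_ord0 /=.
all: rewrite /aa /bb /kk /alpha /dalpha /beta /v2 /= !mxE !big_ord1 !mxE /=.
all: rewrite ?al11_0 ?al22_0 ?dbe23_0 ?dbe14_0 /du10 /du11 /du20 /du21 /du30 /du31 /du40 /du41.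
all: rewrite /icept23 /icept14 /slope23 /slope14 /intercept /slope.
all: by field; rewrite !subr_eq0 ?a_neq ?al12_neq0 ?al21_neq0.
Qed.

Lemma A0A1_dlift : A0 (dlift v dv) = mxdual A0Z dA0 /\ A1 (dlift v dv) = mxdual A1Z dA1.
Proof.
apply: A0A1_unique Wmx_unit_dlift _ => s.
rewrite Lsing_dlift alpha_dlift aa_dlift kk_dlift !mxdualZ !mxdualD mxdualM.
by rewrite addr0 eigen_Z eigen_dlift_eps.
Qed.

Definition Ham_tangent : F :=
  - (2%:R * (icept23 * slope (a2 v) (a3 v) du20 du30
             + intercept (a2 v) (a3 v) du20 du30 * slope23
             + icept14 * slope (a1 v) (a4 v) du11 du41
             + intercept (a1 v) (a4 v) du11 du41 * slope14)).

Lemma Ham_dlift (p2 : F) : (Ham ((p2, 0) : dual F) (dlift v dv)).2 = Ham_tangent.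
Proof.
rewrite Ham_BkM0; last exact: BkM_dlift.
have [-> ->] := A0A1_dlift.
rewrite mxdualM mxdual_trace dualMn dualM dualN /= mul0r addr0 mxtraceD !mxtrace_mx2_mul.
by rewrite /Ham_tangent; congr (- (_ * _)); ring.
Qed.
End FirstOrder.

Lemma dHamE (p2 p3 p4 p5 : F) x : dHam p2 p3 p4 p5 x v = Ham_tangent (dir p2 p3 p4 p5 x v).
Proof. exact: Ham_dlift. Qed.
End OnZ.

Definition Hpair {R : comUnitRingType} (x y u w : R) : R :=
  2%:R * (u - w) * (y * u - x * w) / (x - y) ^+ 2.

Definition dHpair {F : fieldType} (x y u w dx dy du dw : F) : F :=
  (2%:R * ((du - dw) * (y * u - x * w) + (u - w) * (dy * u + y * du - dx * w - x * dw))
     * (x - y)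
   - 2%:R * 2%:R * (u - w) * (y * u - x * w) * (dx - dy)) / (x - y) ^+ 3.

Lemma Hpair_dual (F : fieldType) (x y u w dx dy du dw : F) : x != y ->
  (Hpair ((x, dx) : dual F) (y, dy) (u, du) (w, dw)).2 = dHpair x y u w dx dy du dw.
Proof.
move=> xy; have xy0 : x - y != 0 by rewrite subr_eq0.
rewrite /Hpair !expr2 dualMn !(dualB, dualM) dualV ?mulf_neq0 //= /dHpair.
by field.
Qed.

Definition Hred_tangent {F : fieldType} (v dv : phase F) : F :=
  dHpair (a1 v) (a4 v) (k1 v) (k4 v) (a1 dv) (a4 dv) (k1 dv) (k4 dv)
  + dHpair (a2 v) (a3 v) (k2 v) (k3 v) (a2 dv) (a3 dv) (k2 dv) (k3 dv).

(* [Hred] is, definitionally, the sum of two [Hpair] terms. *)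
Lemma dHredE (F : fieldType) (p2 p3 p4 p5 : F) x (v : phase F) :
  a1 v != a4 v -> a2 v != a3 v ->
  dHred p2 p3 p4 p5 x v = Hred_tangent v (dir p2 p3 p4 p5 x v).
Proof. by move=> a14 a23; rewrite /dHred /Hred_tangent -!Hpair_dual. Qed.

Theorem proposition1 (F : numClosedFieldType) (p2 p3 p4 p5 : F) (v : phase F) :
  (* (a_s, b_s) are points of Sigma : y^2 = P(x), away from branch points *)
  b1 v ^+ 2 = (Pcurve p2 p3 p4 p5).[a1 v] -> b2 v ^+ 2 = (Pcurve p2 p3 p4 p5).[a2 v] ->
  b3 v ^+ 2 = (Pcurve p2 p3 p4 p5).[a3 v] -> b4 v ^+ 2 = (Pcurve p2 p3 p4 p5).[a4 v] ->
  b1 v != 0 -> b2 v != 0 -> b3 v != 0 -> b4 v != 0 ->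
  (* pairwise distinct a_s *)
  a1 v != a2 v -> a1 v != a3 v -> a1 v != a4 v ->
  a2 v != a3 v -> a2 v != a4 v -> a3 v != a4 v ->
  (* genericity: A0, A1 are determined by the equations L(a_s,b_s) alpha_s = kappa_s alpha_s *)
  al12 v != 0 -> al21 v != 0 ->
  (* v is a point of Z *)
  al11 v = 0 -> al22 v = 0 ->
  be11 v = 0 -> be21 v = 0 -> be12 v = 0 -> be22 v = 0 -> be23 v = 0 -> be14 v = 0 ->
  let dH x := dHam p2 p3 p4 p5 x v in
  let dHr x := dHred p2 p3 p4 p5 x v in
  let adot1 := - (2%:R * (a1 v * k4 v + a4 v * (k4 v - 2%:R * k1 v))) / (a1 v - a4 v) ^+ 2 in
  let adot4 := - (2%:R * (a4 v * k1 v + a1 v * (k1 v - 2%:R * k4 v))) / (a1 v - a4 v) ^+ 2 in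
  let adot2 := - (2%:R * (a2 v * k3 v + a3 v * (k3 v - 2%:R * k2 v))) / (a2 v - a3 v) ^+ 2 in
  let adot3 := - (2%:R * (a3 v * k2 v + a2 v * (k2 v - 2%:R * k3 v))) / (a2 v - a3 v) ^+ 2 in
  (* invariance of Z: d(al11)/dt = dH/d(be11) = 0, d(al22)/dt = dH/d(be22) = 0,
     d(be_ij)/dt = - dH/d(al_ij) = 0 *)
  (dH vbe11 = 0 /\ dH vbe22 = 0 /\
   dH val11 = 0 /\ dH val21 = 0 /\ dH val12 = 0 /\ dH val22 = 0) /\
  (* restriction of H to Z *)
  Ham p2 v = Hred v /\
  (* Hamiltonian equations on Z:  a_s' = dH/dk_s,  k_s' = - dH/da_s *)
  (dH vk1 = adot1 /\ dH vk4 = adot4 /\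
   - dH va1 = (k1 v - k4 v) / (a1 v - a4 v) * adot1 /\
   - dH va4 = (k1 v - k4 v) / (a1 v - a4 v) * adot4) /\
  (dH vk2 = adot2 /\ dH vk3 = adot3 /\
   - dH va2 = (k2 v - k3 v) / (a2 v - a3 v) * adot2 /\
   - dH va3 = (k2 v - k3 v) / (a2 v - a3 v) * adot3) /\
  (* al12' = dH/d(be12),  al21' = dH/d(be21) *)
  (dH vbe12 = al12 v * (b2 v + b3 v) / (a2 v - a3 v) * adot3 /\
   dH vbe21 = al21 v * (b1 v + b4 v) / (a1 v - a4 v) * adot4) /\
  (* the first eight equations are Hamilton's equations for H^(r) *)
  (dHr vk1 = adot1 /\ dHr vk2 = adot2 /\ dHr vk3 = adot3 /\ dHr vk4 = adot4 /\
   - dHr va1 = (k1 v - k4 v) / (a1 v - a4 v) * adot1 /\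
   - dHr va2 = (k2 v - k3 v) / (a2 v - a3 v) * adot2 /\
   - dHr va3 = (k2 v - k3 v) / (a2 v - a3 v) * adot3 /\
   - dHr va4 = (k1 v - k4 v) / (a1 v - a4 v) * adot4).
Proof.
move=> _ _ _ _ _ _ _ _ a12 a13 a14 a23 a24 a34 al12_neq0 al21_neq0 al11_0 al22_0.
move=> be11_0 be21_0 be12_0 be22_0 be23_0 be14_0 dH dHr adot1 adot4 adot2 adot3.
split; [|split; first exact: Ham_Z].
all: rewrite /dH /dHr ?dHamE ?dHredE //.
all: rewrite /adot1 /adot2 /adot3 /adot4 /Ham_tangent /Hred_tangent /dHpair.
all: rewrite /du10 /du11 /du20 /du21 /du30 /du31 /du40 /du41.
all: rewrite /icept23 /icept14 /slope23 /slope14 /intercept /slope /=.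
all: repeat split; field.
all: by rewrite !subr_eq0 ?[a4 v == _]eq_sym ?[a3 v == _]eq_sym ?a14 ?a23.
Qed.
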